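(* Let $\mathcal{S}=\{1,\dots,S\}$, $T>0$, and let $R_t$ be the rate matrix of a forward CTMC with $X_0\sim p_{\text{data}}$, conditionals $q_{t|0}(\cdot\mid x_0)$ and marginals $q_t$; let $\hat\lambda_t,\hat r_t$ be the true reverse exit rates and jump distributions and $\lambda^\theta_t,r^\theta_t$ the model exit rates and jump distributions. For $x_0\in\mathcal{S}$ define \[ \hat\lambda_{t|0}(i\mid x_0):=\sum_{j\neq i}R_t(j,i)\frac{q_{t|0}(j\mid x_0)}{q_{t|0}(i\mid x_0)},\qquad \hat r_{t|0}(j\mid i,x_0):=\frac{R_t(j,i)\frac{q_{t|0}(j\mid x_0)}{q_{t|0}(i\mid x_0)}}{\hat\lambda_{t|0}(i\mid x_0)}. \] Let $\mathcal{L}(\theta):=\mathbb{E}_{t\sim\mathcal{U}(0,T),\,x_t\sim q_t}\bigl[\mathrm{KL}^{\text{Poi}}(\hat\lambda_t(x_t)\|\lambda^\theta_t(x_t))+\hat\lambda_t(x_t)\,\mathrm{CE}(\hat r_t(\cdot\mid x_t),r^\theta_t(\cdot\mid x_t))\bigr]$. Then \[ \mathcal{L}(\theta)=\mathbb{E}_{t\sim\mathcal{U}(0,T),\,x_0\sim p_{\text{data}},\,x_t\sim q_{t|0}(\cdot\mid x_0)}\Bigl[-\sum_{j\neq x_t}R_t(j,x_t)\frac{q_{t|0}(j\mid x_0)}{q_{t|0}(x_t\mid x_0)}\log\bigl(\lambda^\theta_t(x_t)r^\theta_t(j\mid x_t)\bigr)-\hat\lambda_{t|0}(x_t\mid x_0)+\lambda^\theta_t(x_t)\Bigr]+\mathrm{const},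 \] where the constant does not depend on $\theta$.
   Context: A rate matrix $R_t$ satisfies $R_t(i,j)\ge0$ ($i\ne j$), $\sum_jR_t(i,j)=0$. $q_{t|0}(i\mid x_0)=\mathbb{P}(X_t=i\mid X_0=x_0)$, $q_t(i)=\sum_{x_0}p_{\text{data}}(x_0)q_{t|0}(i\mid x_0)$. True reverse rates $\hat R_t(i,j)=R_t(j,i)q_t(j)/q_t(i)$, $\hat\lambda_t(i)=\sum_{j\ne i}\hat R_t(i,j)$, $\hat r_t(j\mid i)=\hat R_t(i,j)/\hat\lambda_t(i)$. Model: $\lambda^\theta_t(i)>0$, $r^\theta_t(\cdot\mid i)$ a probability distribution on $\mathcal{S}\setminus\{i\}$. $\mathrm{KL}^{\text{Poi}}(\lambda\|\lambda')=\lambda\log\frac{\lambda}{\lambda'}-\lambda+\lambda'$, $\mathrm{CE}(\hat r,r)=-\sum_{j\ne i}\hat r(j\mid i)\log r(j\mid i)$. All ratios and logarithms are assumed well defined (e.g. conditional probabilities positive). *)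

From HB Require Import structures.
From mathcomp Require Import all_boot all_order all_algebra.
From mathcomp Require Import all_classical all_reals all_analysis.
Set Implicit Arguments. Unset Strict Implicit. Unset Printing Implicit Defensive.
Import Order.TTheory GRing.Theory Num.Theory.
Import numFieldNormedType.Exports.
Local Open Scope classical_set_scope.
Local Open Scope ring_scope.

Section Defs.
Variables (R : realType) (S : nat).

Definition rate_matrix (Rm : 'I_S -> 'I_S -> R) : Prop :=
  (forall i j, i != j -> 0 <= Rm i j) /\ (forall i, \sum_j Rm i j = 0).

(* Conventions: Rt t i j = R_t(i,j); q t x0 i = q_{t|0}(i | x0);
   p x0 = p_data(x0). *)
Variables (Rt : R -> 'I_S -> 'I_S -> R) (q : R -> 'I_S -> 'I_S -> R)
          (p : 'I_S -> R).

Definition qmarg (t : R) (i : 'I_S) : R := \sum_x0 p x0 * q t x0 i.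

Definition Rhat (t : R) (i j : 'I_S) : R := Rt t j i * qmarg t j / qmarg t i.

Definition lamhat (t : R) (i : 'I_S) : R := \sum_(j | j != i) Rhat t i j.

Definition rhat (t : R) (j i : 'I_S) : R := Rhat t i j / lamhat t i.

Definition lamhat_cond (t : R) (i x0 : 'I_S) : R :=
  \sum_(j | j != i) Rt t j i * (q t x0 j / q t x0 i).

Definition rhat_cond (t : R) (j i x0 : 'I_S) : R :=
  Rt t j i * (q t x0 j / q t x0 i) / lamhat_cond t i x0.

End Defs.

Definition KLpoi (R : realType) (l l' : R) : R := l * ln (l / l') - l + l'.

Definition CE (R : realType) (S : nat) (i : 'I_S) (rh r : 'I_S -> R) : R :=
  - \sum_(j | j != i) rh j * ln (r j).

Section Loss.
Variables (R : realType) (S : nat) (Theta : Type)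
  (Rt : R -> 'I_S -> 'I_S -> R) (q : R -> 'I_S -> 'I_S -> R) (p : 'I_S -> R)
  (lam : Theta -> R -> 'I_S -> R) (r : Theta -> R -> 'I_S -> 'I_S -> R).
(* lam th t i = \lambda^\theta_t(i);  r th t j i = r^\theta_t(j | i) *)

Definition loss_integrand (th : Theta) (t : R) : R :=
  \sum_i qmarg q p t i *
    (KLpoi (lamhat Rt q p t i) (lam th t i)
     + lamhat Rt q p t i * CE i (fun j => rhat Rt q p t j i) (fun j => r th t j i)).

Definition cond_integrand (th : Theta) (t : R) : R :=
  \sum_x0 p x0 * \sum_i q t x0 i *
    (- (\sum_(j | j != i) Rt t j i * (q t x0 j / q t x0 i)
                          * ln (lam th t i * r th t j i))
     - lamhat_cond Rt q t i x0 + lam th t i).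

(* t ~ U(0,T): expectation = (1/T) * integral over ]0,T[ w.r.t. Lebesgue measure *)
Definition loss (T : R) (th : Theta) : R :=
  T^-1 * Rintegral lebesgue_measure `]0, T[ (loss_integrand th).

Definition cond_loss (T : R) (th : Theta) : R :=
  T^-1 * Rintegral lebesgue_measure `]0, T[ (cond_integrand th).

End Loss.

From HB Require Import structures.
From mathcomp Require Import all_boot all_order all_algebra.
From mathcomp Require Import all_classical all_reals all_analysis.
From mathcomp Require Import ring.
Import Order.TTheory GRing.Theory Num.Theory.
Import numFieldNormedType.Exports.
Local Open Scope classical_set_scope.
Local Open Scope ring_scope.
Set Implicit Arguments. Unset Strict Implicit.

(** Poisson KL plus [lh] times the cross entropy equals, up to the
  theta-free term [lh ln lh], the Poisson negative log-likelihood
  [lam - sum_j w_j (ln (lam r_j) + 1)] of the unnormalised reverse rates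
  [w_j = R_t(j,i) q_t(j) / q_t(i)].  Once weighted by [q_t(i)], these rates
  become [R_t(j,i) q_t(j)], which is linear in [p_data]: it is the mixture
  over [x_0] of [R_t(j,i) q_{t|0}(j | x_0)], and this mixture is exactly the
  conditional objective.  So the two integrands differ at every [t] by
  [sum_i q_t(i) lh_t(i) ln lh_t(i)], which does not depend on theta. *)

Section PoissonCrossEntropy.
Variables (R : realType) (S : nat).

Lemma KLpoi_add_CE (i : 'I_S) (w rh r : 'I_S -> R) (lh lm : R) :
  0 < lm -> (forall j, j != i -> 0 <= w j) -> (forall j, j != i -> 0 < r j) ->
  lh = \sum_(j | j != i) w j -> (forall j, j != i -> lh * rh j = w j) ->
  KLpoi lh lm + lh * CE i rh r =
  lh * ln lh - \sum_(j | j != i) w j * (ln (lm * r j) + 1) + lm.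
Proof.
move=> lm_gt0 w_ge0 r_gt0 lhE lh_rh.
have lh_ge0 : 0 <= lh by rewrite lhE sumr_ge0.
have KL_ln : lh * ln (lh / lm) = lh * ln lh - lh * ln lm.
  have [->|lh_neq0] := eqVneq lh 0; first by rewrite !mul0r subr0.
  have lh_gt0 : 0 < lh by rewrite lt_def lh_neq0.
  by rewrite ln_div ?posrE //= mulrBr.
have lh_CE : lh * CE i rh r = - \sum_(j | j != i) w j * ln (r j).
  rewrite /CE mulrN mulr_sumr; congr (- _).
  by apply: eq_bigr => j ji; rewrite mulrA lh_rh.
have loglik : \sum_(j | j != i) w j * (ln (lm * r j) + 1) =
              lh * ln lm + \sum_(j | j != i) w j * ln (r j) + lh.
  rewrite lhE mulr_suml -!big_split /=; apply: eq_bigr => j ji.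
  by rewrite lnM ?posrE ?r_gt0 //; ring.
by rewrite /KLpoi KL_ln lh_CE loglik; ring.
Qed.

End PoissonCrossEntropy.

Section FixedTime.
Variables (R : realType) (S : nat) (Theta : Type)
  (Rt : R -> 'I_S -> 'I_S -> R) (q : R -> 'I_S -> 'I_S -> R) (p : 'I_S -> R)
  (lam : Theta -> R -> 'I_S -> R) (r : Theta -> R -> 'I_S -> 'I_S -> R)
  (t : R).
Hypotheses (Rt_ge0 : forall i j, i != j -> 0 <= Rt t i j)
  (p_ge0 : forall x0, 0 <= p x0) (p_sum1 : \sum_x0 p x0 = 1)
  (q_gt0 : forall x0 i, 0 < q t x0 i)
  (lam_gt0 : forall th i, 0 < lam th t i)
  (r_gt0 : forall th i j, j != i -> 0 < r th t j i).

Lemma qmarg_gt0 i : 0 < qmarg q p t i.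
Proof.
have [x0 _ px0_gt0] : exists2 x0, true & 0 < p x0.
  apply/exists_inP; apply: contraT; rewrite negb_exists_in => /forall_inP p_le0.
  suff : \sum_x0 p x0 = 0 by rewrite p_sum1 => /eqP; rewrite oner_eq0.
  by apply: big1 => x _; apply/eqP; rewrite eq_le p_ge0 andbT leNgt p_le0.
rewrite /qmarg (bigD1 x0) //= ltr_pwDl ?mulr_gt0 ?q_gt0 //.
by rewrite sumr_ge0 // => x _; rewrite mulr_ge0 // ltW.
Qed.

Lemma qmarg_mulRhat i j :
  qmarg q p t i * Rhat Rt q p t i j = Rt t j i * qmarg q p t j.
Proof. by rewrite /Rhat mulrC mulfVK // gt_eqF ?qmarg_gt0. Qed.

Lemma Rhat_ge0 i j : j != i -> 0 <= Rhat Rt q p t i j.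
Proof.
by move=> ji; rewrite /Rhat divr_ge0 ?mulr_ge0 ?Rt_ge0 // ltW ?qmarg_gt0.
Qed.

Lemma lamhat_mul_rhat i j :
  j != i -> lamhat Rt q p t i * rhat Rt q p t j i = Rhat Rt q p t i j.
Proof.
move=> ji; have [lh0|lh_neq0] := eqVneq (lamhat Rt q p t i) 0.
  by rewrite lh0 mul0r (psumr_eq0P (@Rhat_ge0 i) lh0).
by rewrite /rhat mulrC divfK.
Qed.

Lemma loss_integrandE th :
  loss_integrand Rt q p lam r th t =
  \sum_i (qmarg q p t i * (lamhat Rt q p t i * ln (lamhat Rt q p t i))
          - \sum_(j | j != i) Rt t j i * qmarg q p t j * (ln (lam th t i * r th t j i) + 1)
          + qmarg q p t i * lam th t i).
Proof.
apply: eq_bigr => i _.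
rewrite (KLpoi_add_CE (lam_gt0 th i) (@Rhat_ge0 i) (@r_gt0 th i) erefl
           (fun j => @lamhat_mul_rhat i j)).
rewrite !mulrDr mulrN mulr_sumr; congr (_ - _ + _).
by apply: eq_bigr => j _; rewrite mulrA qmarg_mulRhat.
Qed.

Lemma cond_integrandE th :
  cond_integrand Rt q p lam r th t =
  \sum_i (- \sum_(j | j != i) Rt t j i * qmarg q p t j * (ln (lam th t i * r th t j i) + 1)
          + qmarg q p t i * lam th t i).
Proof.
set L := fun i j => ln (lam th t i * r th t j i).
have cond_termE x0 i :
    q t x0 i * (- (\sum_(j | j != i) Rt t j i * (q t x0 j / q t x0 i) * L i j)
                - lamhat_cond Rt q t i x0 + lam th t i) =
    - \sum_(j | j != i) Rt t j i * q t x0 j * (L i j + 1) + q t x0 i * lam th t i.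
  have -> : \sum_(j | j != i) Rt t j i * q t x0 j * (L i j + 1) =
      q t x0 i * (\sum_(j | j != i) Rt t j i * (q t x0 j / q t x0 i) * L i j
                  + lamhat_cond Rt q t i x0).
    rewrite -big_split mulr_sumr; apply: eq_bigr => j _ /=.
    by field; rewrite gt_eqF.
  by ring.
rewrite /cond_integrand.
under eq_bigr => x0 _ do under eq_bigr => i _ do rewrite cond_termE.
under eq_bigr do rewrite mulr_sumr.
rewrite exchange_big /=; apply: eq_bigr => i _.
under eq_bigr do rewrite mulrDr mulrN mulr_sumr.
rewrite big_split sumrN /= /qmarg mulr_suml exchange_big /=.
congr (- _ + _); last by apply: eq_bigr => x0 _; rewrite mulrA.
apply: eq_bigr => j _; rewrite mulr_sumr mulr_suml.
by apply: eq_bigr => x0 _; rewrite /L; ring.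
Qed.

Definition mean_lamhat_xlnx : R :=
  \sum_i qmarg q p t i * (lamhat Rt q p t i * ln (lamhat Rt q p t i)).

Lemma loss_integrand_subr_cond th :
  loss_integrand Rt q p lam r th t - cond_integrand Rt q p lam r th t =
  mean_lamhat_xlnx.
Proof.
by rewrite loss_integrandE cond_integrandE -sumrB; apply: eq_bigr => i _; ring.
Qed.

End FixedTime.

Theorem proposition4p6 (R : realType) (S : nat) (T : R) (Theta : Type)
  (Rt : R -> 'I_S -> 'I_S -> R) (q : R -> 'I_S -> 'I_S -> R) (p : 'I_S -> R)
  (lam : Theta -> R -> 'I_S -> R) (r : Theta -> R -> 'I_S -> 'I_S -> R) :
  0 < T ->
  (* forward rate matrices *)
  (forall t, rate_matrix (Rt t)) ->
  (* data distribution *)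
  (forall x0, 0 <= p x0) -> \sum_x0 p x0 = 1 ->
  (* q_{t|0}(.|x0) are the transition probabilities of the forward CTMC:
     Kolmogorov forward equation with initial condition delta_{x0} *)
  (forall x0 i, q 0 x0 i = (i == x0)%:R) ->
  (forall x0 i, {within `[0, T], continuous (fun s => q s x0 i)}) ->
  (forall x0 i t, 0 < t < T ->
     is_derive t 1 (fun s => q s x0 i) (\sum_j q t x0 j * Rt t j i)) ->
  (forall t x0 i, 0 <= t <= T -> 0 <= q t x0 i) ->
  (forall t x0, 0 <= t <= T -> \sum_i q t x0 i = 1) ->
  (* well-definedness: conditional probabilities positive *)
  (forall t x0 i, 0 < t < T -> 0 < q t x0 i) ->
  (* model: positive exit rates, jump distributions on S \ {i} (positive) *)
  (forall th t i, 0 < lam th t i) ->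
  (forall th t i j, j != i -> 0 < r th t j i) ->
  (forall th t i, \sum_(j | j != i) r th t j i = 1) ->
  (* the two objectives are finite *)
  (forall th, lebesgue_measure.-integrable `]0, T[
                (fun t => (loss_integrand Rt q p lam r th t)%:E)) ->
  (forall th, lebesgue_measure.-integrable `]0, T[
                (fun t => (cond_integrand Rt q p lam r th t)%:E)) ->
  exists C : R, forall th : Theta,
    loss Rt q p lam r T th = cond_loss Rt q p lam r T th + C.
Proof.
(* The constant is expressed through q_t itself. *)
move=> _ Rt_rate p_ge0 p_sum1 _ _ _ _ _ q_gt0 lam_gt0 r_gt0 _ loss_int cond_int.
exists (T^-1 * Rintegral lebesgue_measure `]0, T[ (mean_lamhat_xlnx Rt q p)) => th.
rewrite /loss /cond_loss -mulrDr; congr (_ * _).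
have gapE : {in `]0, T[%classic, mean_lamhat_xlnx Rt q p =1
    fun t => loss_integrand Rt q p lam r th t - cond_integrand Rt q p lam r th t}.
  move=> t; rewrite inE /= in_itv /= => t_in.
  by rewrite (loss_integrand_subr_cond (Rt_rate t).1 p_ge0 p_sum1
                (fun x0 i => q_gt0 t x0 i t_in) (lam_gt0 ^~ t) (r_gt0 ^~ t)).
rewrite (eq_Rintegral lebesgue_measure gapE) RintegralB.
- by rewrite addrC subrK.
- exact: measurable_itv.
- exact: loss_int.
- exact: cond_int.
Qed.
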